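(* For every integer $n\ge 3$, $$Kf^{*}(M_n)=\frac{3}{2}(n^{3}-n)+\frac{3\sqrt{3}\,n^{2}(p^{n}-q^{n})}{p^{n}+q^{n}+2}.$$ In particular $Kf^*(M_n)=9\,Kf(M_n)$.
   Context: For an integer $n\ge 3$, the Möbius polyomino network $M_n$ is the graph with vertex set $\{1,\dots,n\}\cup\{1',\dots,n'\}$ whose edges are $\{i,i+1\}$ and $\{i',(i+1)'\}$ for $1\le i\le n-1$, $\{i,i'\}$ for $1\le i\le n$, and the two edges $\{1,n'\}$ and $\{1',n\}$; it is $3$-regular with $2n$ vertices and $3n$ edges. $p=2+\sqrt3$, $q=2-\sqrt3$. For a connected graph $G$ with $m$ edges, the multiplicative degree-Kirchhoff index is $Kf^*(G)=\sum_{i<j}d_id_jr_{ij}$, where $d_i$ is the degree of vertex $i$ and $r_{ij}$ the resistance distance; equivalently $Kf^*(G)=2m\sum_{k=2}^{N}1/\lambda_k$ where $0=\lambda_1<\lambda_2\le\dots\le\lambda_N$ are the eigenvalues of the normalized Laplacian $D^{-1/2}(D-A)D^{-1/2}$. The Kirchhoff index is $Kf(G)=\sum_{i<j}r_{ij}$. *)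

From mathcomp Require Import all_boot all_order all_algebra.
From mathcomp Require Import reals.
Set Implicit Arguments. Unset Strict Implicit. Unset Printing Implicit Defensive.
Import Order.TTheory GRing.Theory Num.Theory.
Local Open Scope ring_scope.

(* A finite simple graph on vertex set 'I_N, given by a symmetric
   irreflexive adjacency relation [adj]. *)
Section Graph.
Variables (R : realType) (N : nat) (adj : 'I_N -> 'I_N -> bool).

Definition deg (i : 'I_N) : nat := #|[set j | adj i j]|.

Definition laplacian : 'M[R]_N :=
  \matrix_(i, j) ((if i == j then (deg i)%:R else 0) - (adj i j)%:R).

(* Resistance distance r_ij: inject unit current at i, extract it at j;
   a potential x solves the Kirchhoff equations x L = e_i - e_j
   (L symmetric); r_ij = x_i - x_j.  The solution is obtained with the
   partial inverse [pinvmx] (for a connected graph e_i - e_j lies in the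
   row space of L and the difference x_i - x_j does not depend on the
   chosen solution). *)
Definition resistance (i j : 'I_N) : R :=
  let x := (delta_mx 0 i - delta_mx 0 j : 'rV[R]_N) *m pinvmx laplacian in
  x 0 i - x 0 j.

Definition kirchhoff : R :=
  \sum_(i < N) \sum_(j < N | (i < j)%N) resistance i j.

Definition mult_deg_kirchhoff : R :=
  \sum_(i < N) \sum_(j < N | (i < j)%N) ((deg i * deg j)%:R * resistance i j).
End Graph.

(* Möbius polyomino network M_n on 'I_(2n): vertex k (1 <= k <= n) is index
   k-1, vertex k' is index n+k-1. *)
Definition mobius_edge (n : nat) (u v : nat) : bool :=
  [|| [&& (v < n)%N & v == u.+1]
    , [&& (n <= u)%N, (v < 2 * n)%N & v == u.+1]
    , [&& (u < n)%N & v == u + n]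
    , [&& u == 0%N & v == (2 * n).-1]
    | [&& u == n.-1 & v == n] ].

Definition mobius_adj (n : nat) (u v : 'I_(2 * n)) : bool :=
  mobius_edge n u v || mobius_edge n v u.

From mathcomp Require Import all_boot all_order all_algebra.
From mathcomp Require Import reals.
From mathcomp Require Import zify ring lra.
Set Implicit Arguments. Unset Strict Implicit. Unset Printing Implicit Defensive.
Import Order.TTheory GRing.Theory Num.Theory.
Local Open Scope ring_scope.

(* Numbering the vertices 1..n, 1'..n' as 0..2n-1, M_n becomes the cycle
   0 - 1 - ... - (2n-1) - 0 together with the "rungs" {t, t+n}: a circulant
   3-regular graph on Z/2n.  Since M_n is 3-regular, Kf* = 9 Kf, and it
   suffices to compute Kf.

   The plan:
   1. General facts about the Laplacian L of a finite graph: the row formula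
      (v L)_k = d_k v_k - sum of v over neighbours, the maximum principle for
      harmonic vectors, and the fact that r_ij = x_i - x_j for every potential
      x with x L = e_i - e_j once ker L consists of constants.
   2. A Green function g on Z/2n with
        3 g(t) - g(t+1) - g(t-1) - g(t+n) = [t = 0] - 1/(2n),
      written on each layer {0..n-1}, {n..2n-1} as (s(j) +- a(j))/2 where
      s(j) = (j^2 - n j)/(2n) is quadratic and a(j) is a combination of
      lam^j, mu^j, the roots of x^2 - 4x + 1.
   3. By translation invariance x = g(. - i) - g(. - j) is a potential, so
      r_ij = 2 g(0) - g(i - j) - g(j - i); summing over all pairs gives the
      closed form for Kf, and the theorem follows by algebra. *)

Section GraphFacts.
Variables (R : realType) (N : nat) (adj : 'I_N -> 'I_N -> bool).
Local Notation L := (laplacian R adj).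

Lemma laplacian_row (v : 'rV[R]_N) (k : 'I_N) :
  (v *m L) 0 k = (deg adj k)%:R * v 0 k - \sum_(j | adj j k) v 0 j.
Proof.
rewrite mxE (eq_bigr (fun j => (if j == k then (deg adj j)%:R * v 0 j else 0)
                               - (if adj j k then v 0 j else 0))).
  by rewrite sumrB -!big_mkcond big_pred1_eq.
move=> j _; rewrite !mxE; case: (adj j k); case: eqP => _ /=; ring.
Qed.

Lemma mult_deg_kirchhoff_regular (d : nat) : (forall i, deg adj i = d) ->
  mult_deg_kirchhoff R adj = (d * d)%:R * kirchhoff R adj.
Proof.
move=> hd; rewrite /mult_deg_kirchhoff /kirchhoff mulr_sumr.
apply: eq_bigr => i _; rewrite mulr_sumr; apply: eq_bigr => j _.
by rewrite !hd.
Qed.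

Lemma resistance_potential (x : 'rV[R]_N) (i j : 'I_N) :
  (forall z : 'rV[R]_N, z *m L = 0 -> forall a b, z 0 a = z 0 b) ->
  x *m L = delta_mx 0 i - delta_mx 0 j ->
  resistance R adj i j = x 0 i - x 0 j.
Proof.
move=> hker hx; rewrite /resistance /=.
set y := _ *m pinvmx L.
have hy : y *m L = delta_mx 0 i - delta_mx 0 j by rewrite mulmxKpV // -hx submxMl.
have := hker (y - x); rewrite mulmxBl hy hx subrr => /(_ erefl i j).
rewrite !mxE; lra.
Qed.

Lemma sum_three (F : 'I_N -> R) (a b c : 'I_N) : a != b -> a != c -> b != c ->
  \sum_(j | [|| j == a, j == b | j == c]) F j = F a + F b + F c.
Proof.
move=> ab ac bc.
rewrite (bigD1 a) ?eqxx //= (bigD1 b) /=; last by rewrite eqxx orbT eq_sym.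
rewrite (bigD1 c) /=; last by rewrite eqxx !orbT eq_sym ac eq_sym bc.
rewrite big_pred0 ?addr0 ?addrA // => j.
by case: eqP; case: eqP; case: eqP.
Qed.

Lemma sum_lt_pairs (F : 'I_N -> 'I_N -> R) :
  (forall i j, F i j = F j i) -> (forall i, F i i = 0) ->
  \sum_(i < N) \sum_(j < N | (i < j)%N) F i j = (\sum_(i < N) \sum_(j < N) F i j) / 2.
Proof.
move=> hs hd.
have split_diag : \sum_(i < N) \sum_(j < N) F i j =
    \sum_(i < N) \sum_(j < N | (i < j)%N) F i j
  + \sum_(i < N) \sum_(j < N | (j < i)%N) F i j.
  rewrite -big_split; apply: eq_bigr => i _ /=.
  rewrite (bigID (fun j : 'I_N => (i < j)%N)) /=; congr (_ + _).
  rewrite (bigD1 i) ?ltnn //= hd; apply: etrans (add0r _) _.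
  by apply: eq_bigl => j; rewrite -val_eqE /=; lia.
have swap : \sum_(i < N) \sum_(j < N | (j < i)%N) F i j =
            \sum_(i < N) \sum_(j < N | (i < j)%N) F i j.
  rewrite (exchange_big_dep xpredT) //=.
  by apply: eq_bigr => a _; apply: eq_bigr => b _; exact: hs.
by rewrite split_diag swap; field.
Qed.

Section Symmetric.
Hypothesis adj_sym : forall i j, adj i j = adj j i.

Lemma deg_sum (k : 'I_N) : (deg adj k)%:R = \sum_(j | adj j k) (1 : R).
Proof.
rewrite /deg -sum1_card natr_sum.
by apply: eq_bigl => j; rewrite inE adj_sym.
Qed.

Lemma harmonic_max (z : 'rV[R]_N) (k : 'I_N) :
  z *m L = 0 -> (forall j, z 0 j <= z 0 k) ->
  forall j, adj j k -> z 0 j = z 0 k.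
Proof.
move=> hz hmax j hj.
have hsum : \sum_(i | adj i k) (z 0 k - z 0 i) = 0.
  have := congr1 (fun w : 'rV[R]_N => w 0 k) hz.
  rewrite /= laplacian_row deg_sum mulr_suml mxE sumrB.
  by under eq_bigr do rewrite mul1r.
have hnn : forall i, adj i k -> 0 <= z 0 k - z 0 i by move=> i _; rewrite subr_ge0.
by move: (psumr_eq0P hnn hsum hj) => /eqP; rewrite subr_eq0 => /eqP.
Qed.

End Symmetric.
End GraphFacts.

(* Destruct every innermost [if] of the goal; combined with [lia] this
   decides the index arithmetic of Z/2n below. *)
Ltac case_ifs := repeat match goal with |- context [if ?b then _ else _] =>
  lazymatch b with context [if _ then _ else _] => fail | _ =>
    let H := fresh "H" in destruct b eqn:H end end.

(* Boolean disjunctions of linear facts: split a hypothesis into its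
   disjuncts, and prove a disjunction by trying each disjunct with [lia]. *)
Ltac split_or H := first [case/orP: H => H; split_or H | idtac].
Ltac prove_or := first [apply/orP; first [left; prove_or | right; prove_or] | lia].

Section CyclicIndex.
Variable n : nat.
Local Notation N := (2 * n)%N.

Definition cyc_succ (k : nat) : nat := if k.+1 == N then 0%N else k.+1.
Definition cyc_pred (k : nat) : nat := if k == 0%N then N.-1 else k.-1.
Definition rung (k : nat) : nat := if (k < n)%N then (k + n)%N else (k - n)%N.
Definition cyc_diff (k i : nat) : nat := if (i <= k)%N then (k - i)%N else (k + N - i)%N.

Lemma cyc_succ_lt k : (k < N)%N -> (cyc_succ k < N)%N.
Proof. by rewrite /cyc_succ; case_ifs; lia. Qed.

Lemma cyc_pred_lt k : (k < N)%N -> (cyc_pred k < N)%N.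
Proof. by rewrite /cyc_pred; case_ifs; lia. Qed.

Lemma rung_lt k : (k < N)%N -> (rung k < N)%N.
Proof. by rewrite /rung; case_ifs; lia. Qed.

Lemma cyc_diff_lt k i : (k < N)%N -> (i < N)%N -> (cyc_diff k i < N)%N.
Proof. by rewrite /cyc_diff; case_ifs; lia. Qed.

Lemma cyc_succ_pred k : (k < N)%N -> cyc_succ (cyc_pred k) = k.
Proof. by rewrite /cyc_succ /cyc_pred; case_ifs; lia. Qed.

Lemma cyc_diff_self k : cyc_diff k k = 0%N.
Proof. by rewrite /cyc_diff leqnn subnn. Qed.

Lemma cyc_diff_eq0 k i : (k < N)%N -> (i < N)%N -> (cyc_diff k i == 0%N) = (k == i).
Proof. by rewrite /cyc_diff; case_ifs; lia. Qed.

(* The cyclic difference is compatible with the three neighbour maps: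
   this is the translation invariance of M_n. *)
Lemma cyc_diff_succ k i : (k < N)%N -> (i < N)%N ->
  cyc_diff (cyc_succ k) i = cyc_succ (cyc_diff k i).
Proof. by rewrite /cyc_succ /cyc_diff; case_ifs; lia. Qed.

Lemma cyc_diff_pred k i : (k < N)%N -> (i < N)%N ->
  cyc_diff (cyc_pred k) i = cyc_pred (cyc_diff k i).
Proof. by rewrite /cyc_pred /cyc_diff; case_ifs; lia. Qed.

Lemma cyc_diff_rung k i : (k < N)%N -> (i < N)%N ->
  cyc_diff (rung k) i = rung (cyc_diff k i).
Proof. by rewrite /rung /cyc_diff; case_ifs; lia. Qed.

Lemma cyc_diff_inj i j j' : (i < N)%N -> (j < N)%N -> (j' < N)%N ->
  cyc_diff i j = cyc_diff i j' -> j = j'.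
Proof. by rewrite /cyc_diff; case_ifs; lia. Qed.

Lemma layer_decomp t : (t < N)%N -> exists (e : bool) (j : nat), (j < n)%N /\ t = (j + n * e)%N.
Proof.
move=> ht; exists (n <= t)%N, (if (n <= t)%N then t - n else t)%N.
by case: (leqP n t) => /= h; rewrite ?muln1 ?muln0; lia.
Qed.

Lemma succ_layer (e : bool) j : (j.+1 < n)%N -> cyc_succ (j + n * e) = (j.+1 + n * e)%N.
Proof. by rewrite /cyc_succ; case: e => /=; case_ifs; lia. Qed.

Lemma pred_layer (e : bool) j : (j.+1 < n)%N -> cyc_pred (j.+1 + n * e) = (j + n * e)%N.
Proof. by rewrite /cyc_pred; case: e => /=; case_ifs; lia. Qed.

Lemma rung_layer (e : bool) j : (j < n)%N -> rung (j + n * e) = (j + n * ~~ e)%N.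
Proof. by rewrite /rung; case: e => /=; case_ifs; lia. Qed.

End CyclicIndex.

Section MobiusIndex.
Variable n : nat.
Hypothesis hn : (3 <= n)%N.
Local Notation N := (2 * n)%N.

Lemma mobius_edgeE (j k : nat) : (j < N)%N -> (k < N)%N ->
  mobius_edge n j k || mobius_edge n k j =
  [|| j == cyc_succ n k, j == cyc_pred n k | j == rung n k].
Proof.
move: hn; rewrite /mobius_edge /cyc_succ /cyc_pred /rung => *.
by case_ifs; apply/idP/idP => E; split_or E; prove_or.
Qed.

Lemma neighbors_distinct k : (k < N)%N ->
  [&& cyc_succ n k != cyc_pred n k, cyc_succ n k != rung n k & cyc_pred n k != rung n k].
Proof. by move: hn; rewrite /cyc_succ /cyc_pred /rung; case_ifs; lia. Qed.

(* Going around the end of a layer switches to the other layer: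
   this is the Moebius twist. *)
Lemma succ_wrap (e : bool) : cyc_succ n (n.-1 + n * e) = (0 + n * ~~ e)%N.
Proof. by move: hn; rewrite /cyc_succ; case: e => /=; case_ifs; lia. Qed.

Lemma pred_wrap (e : bool) : cyc_pred n (0 + n * e) = (n.-1 + n * ~~ e)%N.
Proof. by move: hn; rewrite /cyc_pred; case: e => /=; case_ifs; lia. Qed.

End MobiusIndex.

Section MobiusLaplacian.
Variables (R : realType) (n : nat).
Hypothesis hn : (3 <= n)%N.
Local Notation N := (2 * n)%N.
Local Notation L := (laplacian R (@mobius_adj n)).

Definition osucc (k : 'I_N) : 'I_N := Ordinal (@cyc_succ_lt n k (ltn_ord k)).
Definition opred (k : 'I_N) : 'I_N := Ordinal (@cyc_pred_lt n k (ltn_ord k)).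
Definition orung (k : 'I_N) : 'I_N := Ordinal (@rung_lt n k (ltn_ord k)).

Lemma mobius_adj_sym (j k : 'I_N) : mobius_adj j k = mobius_adj k j.
Proof. by rewrite /mobius_adj orbC. Qed.

Lemma mobius_adjE (j k : 'I_N) :
  mobius_adj j k = [|| j == osucc k, j == opred k | j == orung k].
Proof. by rewrite /mobius_adj mobius_edgeE. Qed.

Lemma mobius_neighbor_sum (F : 'I_N -> R) (k : 'I_N) :
  \sum_(j | mobius_adj j k) F j = F (osucc k) + F (opred k) + F (orung k).
Proof.
rewrite (eq_bigl _ _ (mobius_adjE ^~ k)).
by case/and3P: (neighbors_distinct hn (ltn_ord k)) => *; rewrite sum_three.
Qed.

Lemma mobius_deg (k : 'I_N) : deg (@mobius_adj n) k = 3%N.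
Proof.
have uniq_nb : uniq [:: osucc k; opred k; orung k].
  case/and3P: (neighbors_distinct hn (ltn_ord k)) => h1 h2 h3.
  by rewrite /= !inE negb_or -!val_eqE /= h1 h2 h3.
rewrite /deg -[3%N]/(size [:: osucc k; opred k; orung k]) -(card_uniqP uniq_nb).
apply: eq_card => j.
by rewrite !inE mobius_adj_sym mobius_adjE.
Qed.

Lemma mobius_laplacian_row (v : 'rV[R]_N) (k : 'I_N) :
  (v *m L) 0 k = 3 * v 0 k - (v 0 (osucc k) + v 0 (opred k) + v 0 (orung k)).
Proof. by rewrite laplacian_row mobius_deg mobius_neighbor_sum. Qed.

(* M_n is connected: by the maximum principle a harmonic vector is
   constant, following the cycle from a maximum point. *)
Lemma mobius_harmonic_const (z : 'rV[R]_N) :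
  z *m L = 0 -> forall a b, z 0 a = z 0 b.
Proof.
move=> hz.
have N_gt0 : (0 < N)%N by lia.
pose k0 := [arg max_(k > Ordinal N_gt0) z 0 k]%O.
have hmax : forall j, z 0 j <= z 0 k0.
  by rewrite /k0; case: Order.TotalTheory.arg_maxP => // k _ h j; exact: h.
have spread : forall m (a : 'I_N), cyc_diff n a k0 = m -> z 0 a = z 0 k0.
  elim=> [|m IH] a ha.
    by move: ha => /eqP; rewrite cyc_diff_eq0 // => /eqP /val_inj ->.
  have hpred : z 0 (opred a) = z 0 k0 by apply: IH; rewrite /= cyc_diff_pred // ha.
  have adj_a : mobius_adj a (opred a).
    by rewrite mobius_adjE; apply/orP; left; apply/eqP/val_inj; rewrite /= cyc_succ_pred.
  rewrite -hpred; apply: (harmonic_max mobius_adj_sym hz _ adj_a).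
  by move=> j; rewrite hpred.
by move=> a b; rewrite (spread _ a erefl) (spread _ b erefl).
Qed.

End MobiusLaplacian.

(* The Green function of M_n, built from the roots lam, mu of x^2 - 4x + 1. *)
Section GreenFunction.
Variables (R : realType) (n : nat).
Hypothesis hn : (3 <= n)%N.
Local Notation N := (2 * n)%N.

Definition lam : R := 2 + Num.sqrt 3.
Definition mu : R := 2 - Num.sqrt 3.

Lemma sqrt3_sq : Num.sqrt 3 ^+ 2 = 3 :> R.
Proof. by rewrite sqr_sqrtr // ler0n. Qed.

Lemma sqrt3_gt0 : 0 < Num.sqrt 3 :> R.
Proof. by rewrite sqrtr_gt0 ltr0n. Qed.

Lemma lam_mu : lam * mu = 1.
Proof. by rewrite /lam /mu mulrC -subr_sqr sqrt3_sq; ring. Qed.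

Lemma lamn_gt0 : 0 < lam ^+ n.
Proof. by rewrite exprn_gt0 // /lam; have := sqrt3_gt0; lra. Qed.

Lemma sqrt3_neq0 : Num.sqrt 3 != 0 :> R.
Proof. by rewrite gt_eqF // sqrt3_gt0. Qed.

Lemma lamn1_neq0 : lam ^+ n + 1 != 0.
Proof. by rewrite gt_eqF //; have := lamn_gt0; lra. Qed.

Lemma char_root_rec (x : R) k : x ^+ 2 = 4 * x - 1 -> x ^+ k.+2 = 4 * x ^+ k.+1 - x ^+ k.
Proof. by move=> hx; rewrite !exprS mulrA -expr2 hx; ring. Qed.

Lemma lam_sq : lam ^+ 2 = 4 * lam - 1.
Proof. by rewrite /lam sqrrD sqrt3_sq; ring. Qed.

Lemma mu_sq : mu ^+ 2 = 4 * mu - 1.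
Proof. by rewrite /mu sqrrB sqrt3_sq; ring. Qed.

(* The layer-symmetric part s (solving 2s(j) - s(j+1) - s(j-1) = -1/n) and
   the alternating part a (solving 4a(j) - a(j+1) - a(j-1) = 0), normalised so
   that a(n - j) = -a(j) and a(1) = 2 a(0) - 1/2. *)
Definition sym_part (k : nat) : R := (k%:R ^+ 2 - n%:R * k%:R) / (2 * n%:R).
Definition alt_part (k : nat) : R :=
  (lam ^+ n * mu ^+ k - lam ^+ k) / (2 * Num.sqrt 3 * (lam ^+ n + 1)).

Lemma n_neq0 : n%:R != 0 :> R.
Proof. by rewrite pnatr_eq0; lia. Qed.

Lemma sym_part_rec k : sym_part k.+2 = 2 * sym_part k.+1 - sym_part k + n%:R^-1.
Proof. by rewrite /sym_part -!natr1; field; rewrite n_neq0. Qed.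

Lemma alt_part_rec k : alt_part k.+2 = 4 * alt_part k.+1 - alt_part k.
Proof.
rewrite /alt_part !(char_root_rec _ lam_sq) !(char_root_rec _ mu_sq).
by field; rewrite lamn1_neq0 sqrt3_neq0.
Qed.

Lemma sym_part_reflect k : (k <= n)%N -> sym_part (n - k) = sym_part k.
Proof. by move=> hk; rewrite /sym_part natrB //; field; rewrite n_neq0. Qed.

Lemma alt_part_reflect k : (k <= n)%N -> alt_part (n - k) = - alt_part k.
Proof.
move=> hk.
have lamn_mu_pow j : (j <= n)%N -> lam ^+ n * mu ^+ j = lam ^+ (n - j).
  move=> hj; rewrite -{1}(subnK hj) exprD -mulrA -exprMn lam_mu expr1n mulr1 //.
by rewrite /alt_part lamn_mu_pow ?leq_subr // -(lamn_mu_pow k) // subKn // -[RHS]mulNr opprB.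
Qed.

(* The jump condition producing the unit source at the origin. *)
Lemma alt_part_jump : alt_part 1 = 2 * alt_part 0 - 1 / 2.
Proof.
rewrite /alt_part expr1 expr0 mulr1; set P := lam ^+ n; rewrite /lam /mu.
by field; rewrite /P lamn1_neq0 sqrt3_neq0.
Qed.

Definition half_green (e : bool) (k : nat) : R :=
  (sym_part k + (-1) ^+ e * alt_part k) / 2.

Definition green (t : nat) : R :=
  if (t < n)%N then half_green false t else half_green true (t - n).

Lemma green_at (e : bool) j : (j < n)%N -> green (j + n * e) = half_green e j.
Proof.
move=> hj; rewrite /green; case: e => /=; rewrite ?muln1 ?muln0 ?addn0.
  by rewrite ifN ?addnK //; lia.
by rewrite hj.
Qed.

(* Crossing the twist: position n - k of one layer matches k on the other. *)
Lemma half_green_reflect e k : (k <= n)%N -> half_green (~~ e) (n - k) = half_green e k.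
Proof. by move=> hk; rewrite /half_green sym_part_reflect // alt_part_reflect // signrN mulrNN. Qed.

Lemma half_green_interior e j :
  3 * half_green e j.+1 - (half_green e j.+2 + half_green e j + half_green (~~ e) j.+1)
  = - (2 * n%:R)^-1.
Proof. by rewrite /half_green sym_part_rec alt_part_rec signrN; field; rewrite n_neq0. Qed.

Lemma half_green_origin e :
  3 * half_green e 0 - (half_green e 1 + half_green e 1 + half_green (~~ e) 0)
  = (~~ e)%:R - (2 * n%:R)^-1.
Proof.
rewrite /half_green signrN alt_part_jump /sym_part.
by case: e; rewrite /= ?expr0 ?expr1; field; rewrite n_neq0.
Qed.

(* The successor of the last position of a layer is handled by reflection. *)
Lemma green_succ (e : bool) j : (j < n)%N ->
  green (cyc_succ n (j + n * e)) = half_green e j.+1.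
Proof.
move=> hj; case: (ltnP j.+1 n) => hj1.
  by rewrite succ_layer // green_at.
have -> : j = n.-1 by lia.
rewrite succ_wrap // green_at; last lia.
by rewrite prednK; [rewrite -{1}(subnn n) half_green_reflect | lia].
Qed.

Lemma green_eq t : (t < N)%N ->
  3 * green t - (green (cyc_succ n t) + green (cyc_pred n t) + green (rung n t))
  = (t == 0%N)%:R - (2 * n%:R)^-1.
Proof.
move=> ht; have [e [j [hj ->]]] := layer_decomp ht.
rewrite green_succ // rung_layer // !green_at //.
case: j hj => [|j] hj.
  have -> : ((0 + n * e)%N == 0%N) = ~~ e by case: e => /=; lia.
  rewrite pred_wrap // green_at; last lia.
  by rewrite -subn1 half_green_reflect // half_green_origin.
have -> : ((j.+1 + n * e)%N == 0%N) = false by lia.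
rewrite pred_layer // green_at; last lia.
by rewrite half_green_interior sub0r.
Qed.

End GreenFunction.

Section MobiusKirchhoff.
Variables (R : realType) (n : nat).
Hypothesis hn : (3 <= n)%N.
Local Notation N := (2 * n)%N.
Local Notation L := (laplacian R (@mobius_adj n)).
Local Notation g := (green R n).

Definition potential (i : 'I_N) : 'rV[R]_N := \row_k g (cyc_diff n k i).

Lemma potential_laplacian (i : 'I_N) :
  potential i *m L = \row_k ((k == i)%:R - (2 * n%:R)^-1).
Proof.
apply/rowP => k; rewrite mobius_laplacian_row // !mxE /=.
have hk := ltn_ord k; have hi := ltn_ord i.
by rewrite cyc_diff_succ // cyc_diff_pred // cyc_diff_rung // green_eq ?cyc_diff_lt // cyc_diff_eq0.
Qed.

Lemma mobius_resistance (i j : 'I_N) :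
  resistance R (@mobius_adj n) i j = 2 * g 0 - g (cyc_diff n i j) - g (cyc_diff n j i).
Proof.
rewrite (@resistance_potential _ _ _ (potential i - potential j)).
- by rewrite !mxE !cyc_diff_self; ring.
- exact: mobius_harmonic_const.
- by rewrite mulmxBl !potential_laplacian; apply/rowP => k; rewrite !mxE eqxx /=; ring.
Qed.

(* Each row of the matrix (g(i - j)) is a permutation of g. *)
Lemma sum_green_row (i : 'I_N) : \sum_(j < N) g (cyc_diff n i j) = \sum_(t < N) g t.
Proof.
have diff_inj : injective (fun j : 'I_N => Ordinal (cyc_diff_lt (ltn_ord i) (ltn_ord j)) : 'I_N).
  by move=> j j' /(congr1 val) /= /cyc_diff_inj e; apply/val_inj/e.
by rewrite [RHS](reindex_inj diff_inj).
Qed.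

(* The alternating parts of the two layers cancel in the total sum of g. *)
Lemma sum_green : \sum_(t < N) g t = \sum_(j < n) sym_part R n j.
Proof.
rewrite -(big_mkord xpredT) (@big_cat_nat _ _ _ n) //=; last lia.
rewrite -[X in \sum_(X <= i < N) _](add0n n) big_addn (_ : N - n = n)%N; last lia.
rewrite -big_split big_mkord; apply: eq_bigr => j _ /=.
have hj := ltn_ord j.
have lo : g j = half_green R n false j by rewrite -(green_at _ hn false hj) muln0 addn0.
have hi : g (j + n) = half_green R n true j by rewrite -(green_at _ hn true hj) muln1.
by rewrite lo hi /half_green /= expr0 expr1; field.
Qed.

Lemma sum_sym_part m : \sum_(j < m) sym_part R n j =
  (m%:R * (m%:R - 1) * (2 * m%:R - 1) / 6 - n%:R * (m%:R * (m%:R - 1) / 2)) / (2 * n%:R).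
Proof.
elim: m => [|m IH]; first by rewrite big_ord0; field; rewrite n_neq0.
by rewrite big_ord_recr /= IH /sym_part -natr1; field; rewrite n_neq0.
Qed.

Lemma mobius_kirchhoff : kirchhoff R (@mobius_adj n) =
  (n%:R ^+ 3 - n%:R) / 6 + n%:R ^+ 2 * (lam R ^+ n - 1) / (Num.sqrt 3 * (lam R ^+ n + 1)).
Proof.
rewrite /kirchhoff (eq_bigr (fun i : 'I_N => \sum_(j < N | (i < j)%N)
    (2 * g 0 - g (cyc_diff n i j) - g (cyc_diff n j i)))); last first.
  by move=> i _; apply: eq_bigr => j _; exact: mobius_resistance.
rewrite sum_lt_pairs => [|i j|i]; last 2 first.
- by ring.
- by rewrite cyc_diff_self; ring.
have rows : \sum_(i < N) \sum_(j < N) g (cyc_diff n i j) = (\sum_(t < N) g t) *+ N.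
  by rewrite (eq_bigr _ (fun i _ => sum_green_row i)) sumr_const card_ord.
have cols : \sum_(i < N) \sum_(j < N) g (cyc_diff n j i) = (\sum_(t < N) g t) *+ N.
  by rewrite exchange_big rows.
have g0 : g 0 = half_green R n false 0 by rewrite -(green_at _ hn false) ?muln0 //; lia.
rewrite (eq_bigr (fun i : 'I_N => (2 * g 0) *+ N
    - \sum_(j < N) g (cyc_diff n i j) - \sum_(j < N) g (cyc_diff n j i))); last first.
  by move=> i _; rewrite !sumrB sumr_const card_ord.
rewrite !sumrB sumr_const card_ord rows cols sum_green sum_sym_part g0.
rewrite /half_green /sym_part /alt_part expr0 mulr1 mul1r.
by field; rewrite lamn1_neq0 sqrt3_neq0 n_neq0.
Qed.

End MobiusKirchhoff.

Theorem theorem4p4 (R : realType) (n : nat) (hn : (3 <= n)%N) :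
  let p : R := 2 + Num.sqrt 3 in
  let q : R := 2 - Num.sqrt 3 in
  mult_deg_kirchhoff R (@mobius_adj n) =
    3 / 2 * (n%:R ^+ 3 - n%:R)
    + 3 * Num.sqrt 3 * n%:R ^+ 2 * (p ^+ n - q ^+ n) / (p ^+ n + q ^+ n + 2)
  /\ mult_deg_kirchhoff R (@mobius_adj n) = 9 * kirchhoff R (@mobius_adj n).
Proof.
move=> p q.
have kf9 : mult_deg_kirchhoff R (@mobius_adj n) = 9 * kirchhoff R (@mobius_adj n).
  by rewrite (mult_deg_kirchhoff_regular R (mobius_deg hn)).
split=> //; rewrite kf9 mobius_kirchhoff // /p /q -/(lam R) -/(mu R).
have lamn_pos : 0 < lam R ^+ n by exact: lamn_gt0.
have lamn_neq0 : lam R ^+ n != 0 by rewrite gt_eqF.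
have mun : mu R ^+ n = (lam R ^+ n)^-1.
  by apply: (mulIf lamn_neq0); rewrite mulVf // -exprMn [mu R * _]mulrC lam_mu expr1n.
have nine : (9 : R) = 3 * Num.sqrt 3 ^+ 2 by rewrite sqrt3_sq; ring.
rewrite mun mulrDr {2}nine.
field; rewrite lamn_neq0 lamn1_neq0 sqrt3_neq0 andbT /=.
by rewrite gt_eqF //; nra.
Qed.
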